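(* Let $d\ge3$ be an integer and $\nu>0$. Let $(\hat Z_t)_{t\ge0}$ be the continuous-time Markov chain on $\mathbb N_0\cup\{\dagger\}$ with transition rates $\hat r(i,i+1)=2\frac{d-1}{d}$ for $i\ge1$, $\hat r(i,i-1)=\frac2d$ for $i\ge1$, $\hat r(0,1)=2$, $\hat r(i,\dagger)=\nu i$ for $i\in\mathbb N_0$, and all other rates zero (so $\dagger$ is absorbing). Define the collision local time $$R_{d,\nu}(i)=\mathsf E\Big[\int_0^\infty\mathbf 1_{\{\hat Z_t=0\}}\,{\rm d}t\ \Big|\ \hat Z_0=i\Big].$$ Then $R_{d,\nu}(0)=\dfrac{1}{2\vartheta_{d,\nu}}$.
   Context: $\beta_d=\sqrt{d-1}$, $\rho_d=2\sqrt{d-1}/d$; $\Delta_{d,\nu}$ is the continued fraction $\Delta_{d,\nu}=\cfrac{1}{a_1-\cfrac{1}{a_2-\cfrac{1}{a_3-\cdots}}}$ with $a_i=\frac{2+i\nu}{\rho_d}$; and $\vartheta_{d,\nu}=1-\Delta_{d,\nu}/\beta_d$. (The chain $\hat Z$ models the distance of two independent rate-1 random walks on the infinite $d$-regular tree whose connecting path's edges each disappear at rate $\nu$, $\dagger$ representing disconnection.) *)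

From HB Require Import structures.
From mathcomp Require Import all_boot all_order all_algebra.
From mathcomp Require Import all_classical all_reals all_analysis.
Set Implicit Arguments. Unset Strict Implicit. Unset Printing Implicit Defensive.
Import Order.TTheory GRing.Theory Num.Theory.
Import numFieldNormedType.Exports.
Local Open Scope classical_set_scope.
Local Open Scope ring_scope.

(* State space N_0 ∪ {†}: [Some i] is the state i, [None] is † (dagger). *)
Definition state := option nat.

Section Chain.
Variables (R : realType) (d : nat) (nu : R).

Definition beta_d : R := Num.sqrt (d%:R - 1).
Definition rho_d : R := 2 * Num.sqrt (d%:R - 1) / d%:R.
Definition cf_a (i : nat) : R := (2 + i%:R * nu) / rho_d.

(* cf_tail n k = 1/(a_k - 1/(a_{k+1} - ... - 1/a_{k+n-1})), cf_tail 0 k = 0 *)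
Fixpoint cf_tail (n k : nat) : R :=
  if n is n'.+1 then (cf_a k - cf_tail n' k.+1)^-1 else 0.
Definition Delta_conv (n : nat) : R := cf_tail n 1.
Definition Delta_dnu : R := lim (Delta_conv @ \oo).
Definition theta_dnu : R := 1 - Delta_dnu / beta_d.

Definition rhat (s s' : state) : R :=
  match s, s' with
  | Some 0, Some j => if j == 1%N then 2 else 0
  | Some i.+1, Some j =>
      if j == i.+2 then 2 * (d%:R - 1) / d%:R
      else if j == i then 2 / d%:R else 0
  | Some i, None => nu * i%:R
  | None, _ => 0
  end.

(* total jump rate q(s) = sum_{s' <> s} r^(s, s') *)
Definition qtot (s : state) : R :=
  match s with
  | Some 0 => 2
  | Some i.+1 => 2 + nu * i.+1%:R
  | None => 0
  end.

Local Open Scope ereal_scope.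

(* f n s j t = P_s(Z^_t = j and exactly n jumps occurred in [0,t]),
   defined by the first-jump decomposition. *)
Fixpoint njump_prob (n : nat) (s j : state) (t : R) : \bar R :=
  match n with
  | 0 => if s == j then (expR (- qtot s * t))%:E else 0
  | n'.+1 =>
      \int[lebesgue_measure]_(u in `[0%R, t]%classic)
        \esum_(k in [set k | k != s])
          ((rhat s k * expR (- qtot s * u))%:E * njump_prob n' k j (t - u))
  end.

(* (minimal) transition function of the chain: p_t(s, j) = P_s(Z^_t = j) *)
Definition trans_prob (t : R) (s j : state) : \bar R :=
  \sum_(0 <= n <oo) njump_prob n s j t.

(* collision local time R_{d,nu}(i) = E_i[ int_0^oo 1{Z^_t = 0} dt ]
   = int_0^oo P_i(Z^_t = 0) dt   (Tonelli) *)
Definition collision_local_time (i : nat) : \bar R :=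
  \int[lebesgue_measure]_(t in `[0%R, +oo[%classic) trans_prob t (Some i) (Some 0%N).

End Chain.

From HB Require Import structures.
From mathcomp Require Import all_boot all_order all_algebra.
From mathcomp Require Import all_classical all_reals all_analysis.
From mathcomp Require Import measurable_realfun.
From mathcomp Require Import zify ring lra.
Import Order.TTheory GRing.Theory Num.Theory.
Import numFieldNormedType.Exports.
Local Open Scope classical_set_scope.
Local Open Scope ring_scope.

(* Split the occupation time of 0 according to the number n of jumps already
   made.  The first-jump decomposition writes the corresponding density as a
   Laplace convolution of exponential kernels, so its integral over [0, +oo[ is
   M_n(i) / q(0), where q(0) = 2 and M_n(i) is the probability that the embedded
   jump chain, started at i, sits at 0 after n jumps.  Hence R(0) = G(0) / 2 for
   the Green function G = sum_n M_n of that chain.  The jump chain is a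
   birth-death chain that is killed with probability at least nu / (2 + nu) at
   each step away from 0, so G(0) = w(0) for every bounded solution of
   w = delta_0 + P w.  Such a solution is w(i) = (1 - x_1)^-1 x_1 ... x_i with
   x_k = Delta_k / beta_d, Delta_k the tails of the continued fraction: the tail
   recursion Delta_k = 1 / (a_k - Delta_(k+1)) is the equation w = P w away
   from 0, and w(0) = 1 / theta_(d,nu). *)

Section LebesgueTranslation.
Context {R : realType}.
Local Notation mu := (@lebesgue_measure R).
Local Open Scope ereal_scope.

Lemma measurable_addr (c : R) :
  measurable_fun setT ((fun x => x + c)%R : measurableTypeR R -> measurableTypeR R).
Proof. by apply: measurable_funD => //; exact: measurable_cst. Qed.

Lemma lebesgue_measure_addr (c : R) (A : set R) : measurable A ->
  pushforward mu ((fun x => x + c)%R : measurableTypeR R -> measurableTypeR R) A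
  = mu A.
Proof.
move=> mA; apply/esym/lebesgue_measure_unique => //; first exact: measurable_addr.
move=> mf _ [[a b] _ <-].
transitivity (mu `](a - c)%R, (b - c)%R]); last first.
  rewrite /pushforward /=; congr (mu _); apply/seteqP.
  by split => x /=; rewrite !in_itv /= ?ltrBlDr ?lerBrDr ?ltrBrDr ?lerBlDr.
rewrite !lebesgue_measure_itv/= !lte_fin ltrD2r; case: ifP => // _.
by rewrite -!EFinD opprB addrA subrK.
Qed.

Lemma ge0_integral_addr (F : R -> \bar R) (c : R) :
  measurable_fun setT F -> (forall x, 0 <= F x) ->
  \int[mu]_x F (x + c)%R = \int[mu]_x F x.
Proof.
move=> mF F0; pose phi := (fun x => x + c)%R : measurableTypeR R -> measurableTypeR R.
rewrite -[X in X = _]/(\int[mu]_(x in phi @^-1` setT) (F \o phi) x).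
rewrite -(ge0_integral_pushforward (measurable_addr c)) //.
apply: eq_measure_integral; first exact: measurable_addr.
by move=> mphi A mA _; exact: lebesgue_measure_addr.
Qed.

End LebesgueTranslation.

Section LaplaceConvolution.
Context {R : realType}.
Local Notation mu := (@lebesgue_measure R).
Local Open Scope ereal_scope.

Let ind0 (x : R) : \bar R := (\1_(`[0%R, +oo[%classic : set R) x)%:E.

Let ind0_ge0 x : 0 <= ind0 x.
Proof. by rewrite lee_fin indicE. Qed.

Let measurable_ind0 : measurable_fun setT ind0.
Proof. exact/measurable_EFinP/measurable_indic. Qed.

Let integral_ind0_mul (F : R -> \bar R) :
  \int[mu]_x (ind0 x * F x) = \int[mu]_(x in `[0%R, +oo[) F x.
Proof.
rewrite [RHS]integral_mkcond; apply: eq_integral => x _.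
by rewrite patchE /ind0 indicE; case: (x \in _); rewrite ?mul1e ?mul0e.
Qed.

Definition laplace_conv (g h : R -> \bar R) (t : R) : \bar R :=
  \int[mu]_(u in `[0%R, t]) (g u * h (t - u)%R).

Variables (g h : R -> \bar R).
Hypotheses (mg : measurable_fun setT g) (mh : measurable_fun setT h).
Hypotheses (g0 : forall x, 0 <= g x) (h0 : forall x, 0 <= h x).

Let conv_kernel (p : R * R) : \bar R :=
  ind0 p.2 * ind0 (p.1 - p.2)%R * (g p.2 * h (p.1 - p.2)%R).

Let conv_kernel_ge0 p : 0 <= conv_kernel p.
Proof. by rewrite !mule_ge0. Qed.

Let measurable_conv_kernel : measurable_fun setT conv_kernel.
Proof.
have mB : measurable_fun setT (fun p : R * R => (p.1 - p.2)%R).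
  by apply: measurable_funB; [exact: measurable_fst|exact: measurable_snd].
apply: emeasurable_funM; first apply: emeasurable_funM.
- exact: measurableT_comp measurable_ind0 measurable_snd.
- exact: measurableT_comp measurable_ind0 mB.
apply: emeasurable_funM.
- exact: measurableT_comp mg measurable_snd.
- exact: measurableT_comp mh mB.
Qed.

Let laplace_convE t : laplace_conv g h t = \int[mu]_u conv_kernel (t, u).
Proof.
rewrite /laplace_conv integral_mkcond; apply: eq_integral => u _.
rewrite patchE /conv_kernel /ind0 !indicE /= !mem_setE !in_itv /= !andbT subr_ge0.
by case: (0 <= u)%R; case: (u <= t)%R; rewrite ?mul1e ?mul0e.
Qed.

Lemma laplace_conv_ge0 t : 0 <= laplace_conv g h t.
Proof. by apply: integral_ge0 => u _; rewrite mule_ge0. Qed.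

Lemma measurable_laplace_conv : measurable_fun setT (laplace_conv g h).
Proof.
rewrite (_ : laplace_conv g h = fubini_F mu conv_kernel).
  exact: measurable_fun_fubini_tonelli_F.
by apply/funext => t; rewrite laplace_convE.
Qed.

(* Tonelli, then for fixed [u] the integral over [t] is a translate of that of
   [h]. *)
Lemma integral_laplace_conv :
  \int[mu]_(t in `[0%R, +oo[) laplace_conv g h t =
  \int[mu]_(t in `[0%R, +oo[) g t * \int[mu]_(t in `[0%R, +oo[) h t.
Proof.
have -> : \int[mu]_(t in `[0%R, +oo[) laplace_conv g h t =
          \int[mu]_t laplace_conv g h t.
  rewrite integral_mkcond; apply: eq_integral => t _; rewrite patchE.
  case: ifP => // /negbT; rewrite mem_setE in_itv /= andbT -ltNge => t0.
  by rewrite /laplace_conv set_itv_ge ?integral_set0// bnd_simp -ltNge.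
under eq_integral do rewrite laplace_convE.
rewrite fubini_tonelli //= -integral_ind0_mul -ge0_integralZr //; last first.
- by apply: integral_ge0 => x _; exact: h0.
- by move=> u _; rewrite mule_ge0.
- exact: emeasurable_funM measurable_ind0 mg.
apply: eq_integral => u _; rewrite /conv_kernel /=.
under eq_integral do rewrite (muleACA (ind0 u)).
rewrite ge0_integralZl //; last by rewrite mule_ge0.
- rewrite -integral_ind0_mul -(ge0_integral_addr _ (- u)) //.
  + exact: emeasurable_funM measurable_ind0 mh.
  + by move=> x; rewrite mule_ge0.
- apply: emeasurable_funM.
    apply: measurableT_comp measurable_ind0 _.
    by apply: measurable_funB => //; exact: measurable_cst.
  apply: measurableT_comp mh _.
  by apply: measurable_funB => //; exact: measurable_cst.
- by move=> t _; rewrite mule_ge0.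
Qed.

End LaplaceConvolution.

Section EsumFiniteSupport.
Context {R : realType} {T : choiceType}.
Local Open Scope ereal_scope.

Lemma esum_support1 (A : set T) (F : T -> \bar R) x : A x ->
  (forall k, A k -> 0 <= F k) -> (forall k, A k -> k != x -> F k = 0) ->
  \esum_(k in A) F k = F x.
Proof.
move=> Ax F0 Fx; rewrite (esumID [set x]) //.
have -> : A `&` [set x] = [set x] by apply/seteqP; split => [k [] //|k ->].
rewrite esum_set1 ?F0 // esum1 ?adde0 // => k [Ak /= kx].
by apply: Fx => //; apply/eqP.
Qed.

Lemma esum_support2 (A : set T) (F : T -> \bar R) x y : x != y -> A x -> A y ->
  (forall k, A k -> 0 <= F k) -> (forall k, A k -> k != x -> k != y -> F k = 0) ->
  \esum_(k in A) F k = F x + F y.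
Proof.
move=> xy Ax Ay F0 Fxy; rewrite (esumID [set x]) //.
have -> : A `&` [set x] = [set x] by apply/seteqP; split => [k [] //|k ->].
rewrite esum_set1 ?F0 //; congr (_ + _); apply: esum_support1.
- by split => //= yx; move: xy; rewrite yx eqxx.
- by move=> k [] /F0.
- by move=> k [Ak /= kx] ky; apply: Fxy => //; apply/eqP.
Qed.

End EsumFiniteSupport.

Section ExponentialKernel.
Context {R : realType}.
Local Open Scope ereal_scope.

Definition exp_kernel (c q u : R) : \bar R := (c * expR (- q * u))%:E.

Lemma exp_kernel_ge0 (c q u : R) : (0 <= c)%R -> 0 <= exp_kernel c q u.
Proof. by move=> c0; rewrite lee_fin mulr_ge0 ?expR_ge0. Qed.

Lemma measurable_exp_kernel (c q : R) : measurable_fun setT (exp_kernel c q).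
Proof.
apply/measurable_EFinP; apply: measurable_funM; first exact: measurable_cst.
apply: measurableT_comp; first exact: measurable_expR.
by apply: measurable_funM => //; exact: measurable_cst.
Qed.

Lemma integral_exp_kernel (c q : R) : (0 < q)%R -> (0 <= c)%R ->
  \int[lebesgue_measure]_(u in `[0%R, +oo[) exp_kernel c q u = (c / q)%:E.
Proof.
move=> q0 c0.
have density : \int[lebesgue_measure]_(u in `[0%R, +oo[) exp_kernel q q u = 1.
  rewrite -(integral_exponential_pdf q0) [LHS]integral_mkcond.
  apply: eq_integral => x; rewrite patchE mem_setE in_itv /= andbT; case: leP => x0 _.
    by rewrite exponential_pdfE.
  by rewrite lt0_exponential_pdf.
transitivity (\int[lebesgue_measure]_(u in `[0%R, +oo[) ((c / q)%:E * exp_kernel q q u)).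
  by apply: eq_integral => u _; rewrite -EFinM mulrA divfK // gt_eqF.
rewrite ge0_integralZl ?density ?mule1 //.
- exact: measurable_funTS (measurable_exp_kernel _ _).
- by move=> u _; rewrite exp_kernel_ge0 // ltW.
- by rewrite lee_fin divr_ge0 // ltW.
Qed.

End ExponentialKernel.

Section ExponentialKernelConvolution.
Context {R : realType}.
Local Open Scope ereal_scope.
Variables (c q : R) (h : R -> \bar R).
Hypotheses (c_ge0 : (0 <= c)%R) (mh : measurable_fun setT h) (h_ge0 : forall x, 0 <= h x).

Lemma measurable_laplace_conv_exp_kernel :
  measurable_fun setT (laplace_conv (exp_kernel c q) h).
Proof.
apply: measurable_laplace_conv => //; first exact: measurable_exp_kernel.
by move=> u; exact: exp_kernel_ge0.
Qed.

Lemma integral_laplace_conv_exp_kernel : (0 < q)%R ->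
  \int[lebesgue_measure]_(t in `[0%R, +oo[) laplace_conv (exp_kernel c q) h t =
  (c / q)%:E * \int[lebesgue_measure]_(t in `[0%R, +oo[) h t.
Proof.
move=> q_gt0; rewrite integral_laplace_conv ?integral_exp_kernel //.
- exact: measurable_exp_kernel.
- by move=> u; exact: exp_kernel_ge0.
Qed.

End ExponentialKernelConvolution.

Section BirthDeathGreen.
Context {R : realType}.
Variables (p r : nat -> R).

(* At [i = 0], [i.-1] truncates to [0]; the term vanishes once [r 0 = 0]. *)
Definition bd_op (w : nat -> R) (i : nat) : R := p i * w i.+1 + r i * w i.-1.

Definition delta0 (i : nat) : R := (i == 0)%:R.

Lemma iter_bd_opB N (a b : nat -> R) :
  iter N bd_op (a \- b) = iter N bd_op a \- iter N bd_op b.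
Proof.
elim: N => [|N IH] //=; rewrite IH; apply/funext => i; rewrite /bd_op /=; ring.
Qed.

Lemma bd_fixpoint_expansion (w : nat -> R) :
  (forall i, w i = delta0 i + bd_op w i) ->
  forall N i, w i = \sum_(0 <= n < N) iter n bd_op delta0 i + iter N bd_op w i.
Proof.
move=> wE N; elim: N => [|N IH] i; first by rewrite big_geq // add0r.
have -> : iter N.+1 bd_op w = iter N bd_op (w \- delta0).
  by rewrite iterSr; congr iter; apply/funext => j /=; rewrite [in RHS]wE addrAC subrr add0r.
by rewrite iter_bd_opB big_nat_recr //= {1}IH; ring.
Qed.

Hypotheses (p_ge0 : forall i, 0 <= p i) (r_ge0 : forall i, 0 <= r i).
Hypotheses (p0_le1 : p 0 <= 1) (r0 : r 0 = 0).
Variable lam : R.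
Hypotheses (lam_gt0 : 0 < lam) (lam_lt1 : lam < 1).
Hypothesis killing : forall i, p i.+1 + r i.+1 <= lam.

Let mu := Num.sqrt lam.

Let mu_gt0 : 0 < mu. Proof. by rewrite sqrtr_gt0. Qed.

Let mu_lt1 : mu < 1. Proof. by rewrite -sqrtr1 ltr_sqrt. Qed.

Let mu_sq : mu * mu = lam. Proof. by rewrite -expr2 sqr_sqrtr // ltW. Qed.

(* From 0 the chain moves to 1 without loss, elsewhere it keeps at most [lam]
   of its mass: with weight [mu^-1] at 0, every step contracts by [mu]. *)
Lemma iter_bd_op_decay (w : nat -> R) (C : R) :
  (forall i, 0 <= w i <= C) ->
  forall N i, 0 <= iter N bd_op w i <= C * mu ^+ N * (if i == 0 then mu^-1 else 1).
Proof.
move=> w_bnd N; have C_ge0 : 0 <= C by have /andP[/le_trans] := w_bnd 0; apply.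
have muV_ge1 : 1 <= mu^-1 by rewrite invf_ge1 // ltW.
elim: N => [|N IH] i.
  have /andP[w0 w1] := w_bnd i; rewrite /= expr0 mulr1 w0 /=.
  case: eqP => _; last by rewrite mulr1.
  by apply: le_trans w1 _; rewrite -[X in X <= _]mulr1 ler_wpM2l.
have K_ge0 : 0 <= C * mu ^+ N * mu^-1.
  by rewrite !mulr_ge0 ?exprn_ge0 ?invr_ge0 // ltW.
have nbr_bnd j : 0 <= iter N bd_op w j <= C * mu ^+ N * mu^-1.
  have /andP[-> h] := IH j; apply: le_trans h _; case: eqP => // _.
  by rewrite mulr1 -[X in X <= _]mulr1 ler_wpM2l ?mulr_ge0 ?exprn_ge0 // ltW.
rewrite iterS /bd_op; case: i => [|m] /=.
  rewrite r0 mul0r addr0.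
  have /andP[a0 a1] := IH 1%N; rewrite mulr_ge0 //=.
  apply: le_trans (ler_piMl a0 p0_le1) _; apply: le_trans a1 _.
  by rewrite mulr1 exprSr mulrA mulfK ?gt_eqF.
have /andP[a0 a1] := nbr_bnd m.+2; have /andP[b0 b1] := nbr_bnd m.
rewrite addr_ge0 ?mulr_ge0 //= mulr1 exprSr.
have -> : C * (mu ^+ N * mu) = C * mu ^+ N * mu^-1 * lam.
  by rewrite -mu_sq; field; rewrite gt_eqF.
have pr := ler_wpM2l K_ge0 (killing m).
have := ler_wpM2l (p_ge0 m.+1) a1; have := ler_wpM2l (r_ge0 m.+1) b1.
rewrite mulrDr in pr; nra.
Qed.

Lemma bd_green_cvg (w : nat -> R) (C : R) :
  (forall i, 0 <= w i <= C) -> (forall i, w i = delta0 i + bd_op w i) ->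
  (fun N => \sum_(0 <= n < N) iter n bd_op delta0 0) @ \oo --> w 0.
Proof.
move=> w_bnd wE.
have -> : (fun N => \sum_(0 <= n < N) iter n bd_op delta0 0) =
          (fun N => w 0 - iter N bd_op w 0).
  by apply/funext => N; rewrite (bd_fixpoint_expansion _ wE N 0) addrK.
rewrite -[X in _ --> X]subr0; apply: cvgB; first exact: cvg_cst.
apply: (@squeeze_cvgr _ _ _ _ (cst 0) (fun N => C * mu ^+ N * mu^-1)).
- by near=> N; have := iter_bd_op_decay _ _ w_bnd N 0.
- exact: cvg_cst.
- rewrite -(mul0r mu^-1) -(mulr0 C); apply: cvgM; last exact: cvg_cst.
  by apply: cvgM; [exact: cvg_cst|apply: cvg_expr; rewrite ger0_norm ?ltW].
Unshelve. all: by end_near.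
Qed.

End BirthDeathGreen.

Section ContinuedFractionTails.
Context {R : realType} (d : nat) (nu : R).
Hypothesis cf_a_ge2 : forall k, 2 <= cf_a d nu k.
Local Notation tail n k := (cf_tail d nu n k).

Lemma cf_tail_bounds n k : 0 <= tail n k <= 1.
Proof.
elim: n k => [|n IH] k /=; first by rewrite lexx ler01.
have /andP[t0 t1] := IH k.+1; have a2 := cf_a_ge2 k.
rewrite invr_ge0 invf_le1; lra.
Qed.

Lemma cf_tail_nondecreasing n k : tail n k <= tail n.+1 k.
Proof.
elim: n k => [|n IH] k; first by have /andP[] := cf_tail_bounds 1 k.
have := IH k.+1; have /andP[_] := cf_tail_bounds n k.+1.
have /andP[_] := cf_tail_bounds n.+1 k.+1; have := cf_a_ge2 k.
by rewrite /= => a2 t1' t1 mono; rewrite lef_pV2 ?posrE; lra.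
Qed.

Definition cf_value (k : nat) : R := lim ((fun n => tail n k) @ \oo).

Lemma cvg_cf_tail k : (fun n => tail n k) @ \oo --> cf_value k.
Proof.
apply/cvg_ex; exists (sup (range (fun n => tail n k))); apply: nondecreasing_cvgn.
  by apply/nondecreasing_seqP => n; exact: cf_tail_nondecreasing.
by exists 1 => _ [n _ <-]; have /andP[] := cf_tail_bounds n k.
Qed.

Lemma cf_value_bounds k : 0 <= cf_value k <= 1.
Proof.
apply/andP; split.
  by apply: cvgr_to_ge (cvg_cf_tail k) _; near=> n; have /andP[] := cf_tail_bounds n k.
by apply: cvgr_to_le (cvg_cf_tail k) _; near=> n; have /andP[] := cf_tail_bounds n k.
Unshelve. all: by end_near.
Qed.

Lemma cf_valueE k : cf_value k = (cf_a d nu k - cf_value k.+1)^-1.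
Proof.
have /andP[_ v1] := cf_value_bounds k.+1; have a2 := cf_a_ge2 k.
have shifted : (fun n => tail n.+1 k) @ \oo --> cf_value k.
  by have := cvg_cf_tail k; rewrite -cvg_shiftS.
have recursion : (fun n => (cf_a d nu k - tail n k.+1)^-1) @ \oo -->
                 (cf_a d nu k - cf_value k.+1)^-1.
  apply: cvgV; first by rewrite gt_eqF //; lra.
  by apply: cvgB; [exact: cvg_cst|exact: cvg_cf_tail].
exact: cvg_unique _ shifted recursion.
Qed.

End ContinuedFractionTails.

Section JumpCountDensities.
Context {R : realType} (d : nat) (nu : R).
Hypotheses (d_gt0 : (0 < d)%N) (nu_ge0 : (0 <= nu)%R).
Local Open Scope ereal_scope.
Local Notation f n s := (njump_prob d nu n s (Some 0%N)).
Local Notation q i := (qtot nu (Some i)).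

Lemma rhat_ge0 s k : (0 <= rhat d nu s k)%R.
Proof.
have up_ge0 : (0 <= 2 * (d%:R - 1) / d%:R :> R)%R.
  by rewrite divr_ge0 // mulr_ge0 // subr_ge0 ler1n.
case: s => [[|i]|]; case: k => [j|] //=; rewrite ?mulr_ge0 //;
  by repeat case: ifP => _ //; rewrite divr_ge0.
Qed.

Lemma qtot_gt0 i : (0 < q i)%R.
Proof. by case: i => [|i] //=; rewrite ltr_wpDr // mulr_ge0. Qed.

Lemma njump_prob_ge0 n s j t : 0 <= njump_prob d nu n s j t.
Proof.
elim: n s t => [|n IH] s t /=; first by case: ifP; rewrite ?lee_fin ?expR_ge0.
apply: integral_ge0 => u _; apply: esum_ge0 => k _.
by rewrite mule_ge0 // lee_fin mulr_ge0 ?rhat_ge0 ?expR_ge0.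
Qed.

Lemma njump_prob_dagger n t : f n None t = 0.
Proof.
case: n => [|n] //=; rewrite (eq_integral (fun _ => 0)) ?integral0 //.
by move=> u _; apply: esum1 => k _; rewrite mul0r mul0e.
Qed.

Definition rate_up (i : nat) : R := rhat d nu (Some i) (Some i.+1).
Definition rate_down (i : nat) : R :=
  if i is i'.+1 then rhat d nu (Some i) (Some i') else 0.

Lemma rate_up_ge0 i : (0 <= rate_up i)%R.
Proof. exact: rhat_ge0. Qed.

Lemma rate_down_ge0 i : (0 <= rate_down i)%R.
Proof. by case: i => [|i] //; exact: rhat_ge0. Qed.

Lemma esum_first_jump n i t u :
  \esum_(k in [set k | k != Some i])
     ((rhat d nu (Some i) k * expR (- q i * u))%:E * f n k (t - u)%R)
  = exp_kernel (rate_up i) (q i) u * f n (Some i.+1) (t - u)%R +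
    exp_kernel (rate_down i) (q i) u * f n (Some i.-1) (t - u)%R.
Proof.
have F0 k : [set k | k != Some i] k ->
    0 <= (rhat d nu (Some i) k * expR (- q i * u))%:E * f n k (t - u)%R.
  by move=> _; rewrite mule_ge0 ?njump_prob_ge0 // lee_fin mulr_ge0 ?rhat_ge0 ?expR_ge0.
case: i F0 => [|m] F0.
  rewrite /exp_kernel mul0r mul0e adde0; apply: esum_support1 => //.
  by move=> [[|[|j]]|] //= _ _; rewrite ?mulr0 ?mul0r ?mul0e.
apply: esum_support2 => //=; try by apply/eqP => -[]; lia.
move=> [j|] _; last by rewrite njump_prob_dagger mule0.
move=> j_up j_down /=.
have -> : (j == m.+2) = false by apply: contraNF j_up => /eqP ->.
have -> : (j == m) = false by apply: contraNF j_down => /eqP ->.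
by rewrite mul0r mul0e.
Qed.

Lemma njump_prob_first_jump n i : (forall s, measurable_fun setT (f n s)) ->
  f n.+1 (Some i) =
  laplace_conv (exp_kernel (rate_up i) (q i)) (f n (Some i.+1)) \+
  laplace_conv (exp_kernel (rate_down i) (q i)) (f n (Some i.-1)).
Proof.
move=> mf; apply/funext => t /=.
under eq_integral do rewrite esum_first_jump.
have mshift : measurable_fun setT (fun u : R => t - u)%R.
  by apply: measurable_funB => //; exact: measurable_cst.
rewrite ge0_integralD //.
- by move=> u _; rewrite mule_ge0 ?exp_kernel_ge0 ?njump_prob_ge0 ?rhat_ge0.
- apply: measurable_funTS; apply: emeasurable_funM; first exact: measurable_exp_kernel.
  exact: measurableT_comp (mf _) mshift.
- by move=> u _; rewrite mule_ge0 ?exp_kernel_ge0 ?njump_prob_ge0 ?rate_down_ge0.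
- apply: measurable_funTS; apply: emeasurable_funM; first exact: measurable_exp_kernel.
  exact: measurableT_comp (mf _) mshift.
Qed.

Lemma measurable_njump_prob n s : measurable_fun setT (f n s).
Proof.
elim: n s => [|n IH] [i|].
- rewrite /=; case: eqP => _; last exact: measurable_cst.
  rewrite (_ : (fun t => _) = exp_kernel 1 (q i)); first exact: measurable_exp_kernel.
  by apply/funext => t; rewrite /exp_kernel mul1r.
- exact: measurable_cst.
- rewrite njump_prob_first_jump //; apply: emeasurable_funD.
  + by apply: measurable_laplace_conv_exp_kernel; [exact: rate_up_ge0|exact: IH|exact: njump_prob_ge0].
  + by apply: measurable_laplace_conv_exp_kernel;
      [exact: rate_down_ge0|exact: IH|exact: njump_prob_ge0].
- rewrite (_ : f n.+1 None = cst 0); first exact: measurable_cst.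
  by apply/funext => t; rewrite njump_prob_dagger.
Qed.

Local Hint Resolve njump_prob_ge0 measurable_njump_prob rate_up_ge0 rate_down_ge0 : core.

Definition jump_up (i : nat) : R := rate_up i / q i.
Definition jump_down (i : nat) : R := rate_down i / q i.

Lemma jump_up_ge0 i : (0 <= jump_up i)%R.
Proof. by rewrite divr_ge0 // ltW // qtot_gt0. Qed.

Lemma jump_down_ge0 i : (0 <= jump_down i)%R.
Proof. by rewrite divr_ge0 // ltW // qtot_gt0. Qed.

Definition visit0_prob (n i : nat) : R := iter n (bd_op jump_up jump_down) delta0 i.

Lemma integral_njump_prob n i :
  \int[lebesgue_measure]_(t in `[0%R, +oo[) f n (Some i) t = (visit0_prob n i / 2)%:E.
Proof.
elim: n i => [|n IH] i.
  rewrite /visit0_prob /delta0 /=; case: i => [|i] /=; last by rewrite mul0r integral0.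
  by rewrite -integral_exp_kernel //; apply: eq_integral => u _; rewrite /exp_kernel mul1r.
rewrite njump_prob_first_jump // ge0_integralD //.
- rewrite !integral_laplace_conv_exp_kernel ?qtot_gt0 //; rewrite !IH -!EFinM -EFinD.
  by rewrite /visit0_prob /= /bd_op /jump_up /jump_down mulrDl !mulrA.
- by move=> t _; apply: laplace_conv_ge0 => x; rewrite ?exp_kernel_ge0.
- by apply: measurable_funTS; apply: measurable_laplace_conv_exp_kernel.
- by move=> t _; apply: laplace_conv_ge0 => x; rewrite ?exp_kernel_ge0.
- by apply: measurable_funTS; apply: measurable_laplace_conv_exp_kernel.
Qed.

Lemma collision_local_time_series :
  collision_local_time d nu 0 = \sum_(0 <= n <oo) (visit0_prob n 0 / 2)%:E.
Proof.
rewrite /collision_local_time /trans_prob integral_nneseries //.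
- by apply: eq_eseriesr => n _; rewrite integral_njump_prob.
- by move=> n; exact: measurable_funTS (measurable_njump_prob n _).
Qed.

End JumpCountDensities.

Lemma eseries_EFin_cvg {R : realType} (u : nat -> R) (l : R) :
  (fun N => \sum_(0 <= n < N) u n) @ \oo --> l ->
  (\sum_(0 <= n <oo) (u n)%:E)%E = l%:E.
Proof.
move=> u_cvg; have -> : (fun N => (\sum_(0 <= n < N) (u n)%:E)%E) =
    EFin \o (fun N => \sum_(0 <= n < N) u n).
  by apply/funext => N; rewrite /= sumEFin.
by rewrite EFin_lim ?(cvg_lim _ u_cvg) //; apply/cvg_ex; exists l.
Qed.

Section CollisionGreenFunction.
Context {R : realType} (d : nat) (nu : R).
Hypotheses (d_ge3 : (3 <= d)%N) (nu_gt0 : 0 < nu).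
Local Notation beta := (beta_d R d).
Local Notation p_up := (jump_up d nu).
Local Notation p_down := (jump_down d nu).

Let dR_ge3 : 3 <= d%:R :> R.
Proof. by rewrite ler_nat. Qed.

Let dR_gt0 : 0 < d%:R :> R.
Proof. by have := dR_ge3; lra. Qed.

Lemma beta_d_sq : beta ^+ 2 = d%:R - 1.
Proof. by rewrite sqr_sqrtr //; have := dR_ge3; lra. Qed.

Lemma beta_d_gt1 : 1 < beta.
Proof. by rewrite -sqrtr1 ltr_sqrt; have := dR_ge3; lra. Qed.

(* [rho_d <= 1] is [2 beta <= beta^2 + 1 = d]. *)
Lemma cf_a_ge2 k : 2 <= cf_a d nu k.
Proof.
have b1 := beta_d_gt1; have rhoE : rho_d R d = 2 * beta / d%:R by [].
have rho_gt0 : 0 < rho_d R d by rewrite rhoE divr_gt0 // mulr_gt0 //; lra.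
have rho_le1 : rho_d R d <= 1.
  rewrite rhoE ler_pdivrMr // mul1r.
  by have := sqr_ge0 (beta - 1); rewrite sqrrB1 beta_d_sq; lra.
have : 0 <= k%:R * nu by rewrite mulr_ge0 // ltW.
by rewrite ler_pdivlMr //; nra.
Qed.

Let q_gt0 m : 0 < 2 + nu * m.+1%:R.
Proof. by rewrite ltr_wpDr // mulr_ge0 // ltW. Qed.

Lemma jump_up0 : p_up 0 = 1.
Proof. by rewrite /jump_up /rate_up /= divff. Qed.

Lemma jump_down0 : p_down 0 = 0.
Proof. by rewrite /jump_down /rate_down mul0r. Qed.

Lemma jump_upS m : p_up m.+1 = 2 * (d%:R - 1) / d%:R / (2 + nu * m.+1%:R).
Proof. by rewrite /jump_up /rate_up /= eqxx. Qed.

Lemma jump_downS m : p_down m.+1 = 2 / d%:R / (2 + nu * m.+1%:R).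
Proof. by rewrite /jump_down /rate_down /= ltn_eqF // eqxx. Qed.

Lemma jump_probs_killing m : p_up m.+1 + p_down m.+1 <= 2 / (2 + nu).
Proof.
rewrite jump_upS jump_downS -!mulrDl (_ : 2 * (d%:R - 1) + 2 = 2 * d%:R); last by ring.
rewrite mulrK ?unitfE ?gt_eqF // ler_wpM2l // lef_pV2 ?posrE ?q_gt0 //; last by rewrite addr_gt0.
by rewrite lerD2l ler_peMr ?ler1n // ltW.
Qed.

Definition cf_ratio (k : nat) : R := cf_value d nu k / beta.

Lemma cf_ratio_bounds k : 0 <= cf_ratio k <= 1.
Proof.
have /andP[v0 v1] := cf_value_bounds d nu cf_a_ge2 k; have b1 := beta_d_gt1.
by rewrite divr_ge0 ?ler_pdivrMr /=; lra.
Qed.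

Lemma cf_ratio1_lt1 : cf_ratio 1 < 1.
Proof.
have /andP[_ v1] := cf_value_bounds d nu cf_a_ge2 1; have b1 := beta_d_gt1.
by rewrite ltr_pdivrMr; lra.
Qed.

(* With [h i = \prod_(1 <= k < i.+1) cf_ratio k], this is [h = P h] at [i.+1],
   [P] the kernel of the jump chain. *)
Lemma cf_ratio_recursion m :
  cf_ratio m.+1 = p_up m.+1 * cf_ratio m.+1 * cf_ratio m.+2 + p_down m.+1.
Proof.
have /andP[_ v1] := cf_value_bounds d nu cf_a_ge2 m.+2; have a2 := cf_a_ge2 m.+1.
have b1 := beta_d_gt1; have q0 := q_gt0 m; have E := cf_valueE d nu cf_a_ge2 m.+1.
set y1 := cf_value d nu m.+1 in E *; set y2 := cf_value d nu m.+2 in E v1 *.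
set a := cf_a d nu m.+1 in E a2.
have {}E : y1 * (a - y2) = 1 by rewrite E mulVf // gt_eqF //; lra.
have aE : a = (2 + nu * m.+1%:R) * d%:R / (2 * beta).
  by rewrite /a /cf_a /rho_d -/(beta_d R d); field; rewrite !gt_eqF //; lra.
rewrite /cf_ratio jump_upS jump_downS -beta_d_sq -/y1 -/y2.
apply/eqP; rewrite -subr_eq0; apply/eqP.
transitivity (2 / (d%:R * (2 + nu * m.+1%:R)) * (y1 * (a - y2) - 1)).
  by rewrite aE; field; rewrite !gt_eqF //; lra.
by rewrite E subrr mulr0.
Qed.

Lemma theta_dnuE : theta_dnu d nu = 1 - cf_ratio 1.
Proof. by []. Qed.

Definition green0 (i : nat) : R :=
  (1 - cf_ratio 1)^-1 * \prod_(1 <= k < i.+1) cf_ratio k.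

Lemma green0_bounds i : 0 <= green0 i <= (1 - cf_ratio 1)^-1.
Proof.
have C_ge0 : 0 <= (1 - cf_ratio 1)^-1.
  by rewrite invr_ge0 subr_ge0 ltW // cf_ratio1_lt1.
rewrite /green0; apply/andP; split.
  by rewrite mulr_ge0 // prodr_ge0 // => k _; have /andP[] := cf_ratio_bounds k.
by rewrite ler_piMr // prodr_ile1 // => k _; exact: cf_ratio_bounds.
Qed.

Lemma green0_fixpoint i : green0 i = delta0 i + bd_op p_up p_down green0 i.
Proof.
rewrite /bd_op /green0 /delta0; case: i => [|m] /=.
  rewrite jump_up0 jump_down0 !big_nat1 big_geq // mulr1 mul1r mul0r !addr0.
  have := cf_ratio1_lt1; move: (cf_ratio 1) => x x_lt1.
  by field; rewrite gt_eqF // subr_gt0.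
rewrite add0r (big_nat_recr m.+2) // (big_nat_recr m.+1) //=.
by rewrite [in LHS](cf_ratio_recursion m); ring.
Qed.

Lemma visit0_series_cvg :
  (fun N => \sum_(0 <= n < N) visit0_prob d nu n 0) @ \oo --> (theta_dnu d nu)^-1.
Proof.
have -> : (theta_dnu d nu)^-1 = green0 0 by rewrite theta_dnuE /green0 big_geq // mulr1.
apply: (@bd_green_cvg R p_up p_down _ _ _ jump_down0 (2 / (2 + nu)) _ _
  jump_probs_killing _ _ green0_bounds green0_fixpoint).
- by apply: jump_up_ge0; [lia|exact: ltW].
- by apply: jump_down_ge0; [lia|exact: ltW].
- by rewrite jump_up0.
- by rewrite divr_gt0 // addr_gt0.
- by rewrite ltr_pdivrMr ?addr_gt0 // mul1r ltrDl.
Qed.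

End CollisionGreenFunction.

Theorem proposition4p1 (R : realType) (d : nat) (nu : R) :
  (3 <= d)%N -> 0 < nu ->
  collision_local_time d nu 0 = ((2 * theta_dnu d nu)^-1)%:E.
Proof.
move=> d_ge3 nu_gt0.
rewrite collision_local_time_series; [|lia|exact: ltW].
apply: eseries_EFin_cvg; rewrite invfM mulrC.
under eq_fun do rewrite -mulr_suml.
by apply: cvgM; [exact: visit0_series_cvg|exact: cvg_cst].
Qed.
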